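(* Let $L\ge 1$, let $\sigma$ be the Lebesgue measure on a fixed convex compact set of $\mathbb{R}^L$ (normalized to be a probability measure), and let $\mu\in\mathcal{P}_2(\mathbb{R}^L)$. Let $\epsilon\ge 0$ and let $\mathcal{G}\subseteq\mathcal{T}_L$ be a convex set such that for every $g\in\mathcal{G}$ there exists $h\in\mathcal{A}$ with $\|g-h\|\le\epsilon$. Let $\delta>0$ be such that for every $g\in\mathcal{G}$, $$\big\|T_\sigma^{g_\sharp\mu}-g\circ T_\sigma^{\mu}\big\|_\sigma<\delta .$$ Then the set $\widehat{\mathcal{G}_\sharp\mu}:=\{T_\sigma^{\nu}:\ \nu\in\mathcal{G}_\sharp\mu\}$, where $\mathcal{G}_\sharp\mu:=\{g_\sharp\mu: g\in\mathcal{G}\}$, is $2\delta$-convex in the following sense: for every $c\in[0,1]$ and all $g_1,g_2\in\mathcal{G}$, setting $g_c=(1-c)g_1+cg_2\in\mathcal{G}$, $$\big\|(1-c)\,T_\sigma^{(g_1)_\sharp\mu}+c\,T_\sigma^{(g_2)_\sharp\mu}-T_\sigma^{(g_c)_\sharp\mu}\big\|_\sigma<2\delta .$$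
   Context: $\mathcal{P}_2(\mathbb{R}^L)$ denotes the set of probability measures $\mu$ on $\mathbb{R}^L$ with finite second moment $\int\|x\|^2\,d\mu(x)<\infty$ that are absolutely continuous with respect to Lebesgue measure with a bounded density. For $\mu\in\mathcal{P}_2(\mathbb{R}^L)$, $T_\sigma^{\mu}:\mathbb{R}^L\to\mathbb{R}^L$ denotes the (unique, by Brenier's theorem) minimizer of $\int\|x-T(x)\|^2\,d\sigma(x)$ over all measurable maps $T$ with $T_\sharp\sigma=\mu$, where the push-forward is defined by $T_\sharp\sigma(B)=\sigma(T^{-1}(B))$ for measurable $B$; the map $\mu\mapsto T_\sigma^\mu$ is the linear optimal transport (LOT) transform. For a map $T:\mathbb{R}^L\to\mathbb{R}^L$, $\|T\|_\sigma:=\big(\int\|T(x)\|^2\,d\sigma(x)\big)^{1/2}$. $\mathcal{T}_L$ is the set of all diffeomorphisms of $\mathbb{R}^L$ onto itself. $\mathcal{A}=\{h(x)=ax+b:\ a>0,\ b\in\mathbb{R}^L\}$ is the set of compositions of isotropic scalings and translations. Convexity of $\mathcal{G}$ means that $(1-c)g_1+cg_2\in\mathcal{G}$ for all $g_1,g_2\in\mathcal{G}$, $c\in[0,1]$ (pointwise convex combination of maps). *)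

From HB Require Import structures.
From mathcomp Require Import all_boot all_order all_algebra.
From mathcomp Require Import all_classical all_reals all_analysis.
Set Implicit Arguments.
Unset Strict Implicit.
Unset Printing Implicit Defensive.
Import Order.TTheory GRing.Theory Num.Theory.
Import numFieldNormedType.Exports.
Local Open Scope classical_set_scope.
Local Open Scope ring_scope.

Definition Vsp (R : realType) (L : nat) := g_sigma_algebraType (@open 'rV[R]_L).

Definition enorm (R : realType) (L : nat) (x : 'rV[R]_L) : R :=
  Num.sqrt (\sum_(i < L) x ord0 i ^+ 2).

(* lambda is the Lebesgue measure on the Borel sets of R^L: it gives every
   closed box its volume (this determines it uniquely). *)
Definition is_lebesgue (R : realType) (L : nat)
    (lambda : {measure set (Vsp R L) -> \bar R}) : Prop :=
  forall a b : 'rV[R]_L, (forall i, a ord0 i <= b ord0 i) ->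
    lambda [set x : Vsp R L | forall i, a ord0 i <= x ord0 i <= b ord0 i]
    = (\prod_(i < L) (b ord0 i - a ord0 i))%:E.

Definition L2norm (R : realType) (L : nat)
    (sigma : {measure set (Vsp R L) -> \bar R}) (T : 'rV[R]_L -> 'rV[R]_L)
    : \bar R :=
  Lnorm sigma 2%:E (fun x : Vsp R L => (enorm (T x))%:E).

Definition tcost (R : realType) (L : nat)
    (sigma : {measure set (Vsp R L) -> \bar R}) (T : 'rV[R]_L -> 'rV[R]_L)
    : \bar R :=
  (\int[sigma]_x ((enorm (x - T x)) ^+ 2)%:E)%E.

Definition pushes (R : realType) (L : nat)
    (sigma : {measure set (Vsp R L) -> \bar R}) (mu : set (Vsp R L) -> \bar R)
    (T : 'rV[R]_L -> 'rV[R]_L) : Prop :=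
  measurable_fun [set: Vsp R L] (T : Vsp R L -> Vsp R L) /\
  forall A : set (Vsp R L), measurable A -> pushforward sigma (T : Vsp R L -> Vsp R L) A = mu A.

Definition is_OT_map (R : realType) (L : nat)
    (sigma : {measure set (Vsp R L) -> \bar R}) (mu : set (Vsp R L) -> \bar R)
    (T : 'rV[R]_L -> 'rV[R]_L) : Prop :=
  pushes sigma mu T /\
  forall T', pushes sigma mu T' -> (tcost sigma T <= tcost sigma T')%E.

(* The LOT transform T_sigma^mu: the (Brenier, sigma-a.e. unique) optimal map,
   chosen by Hilbert's epsilon (default 0 if none exists). *)
Definition LOT (R : realType) (L : nat)
    (sigma : {measure set (Vsp R L) -> \bar R}) (mu : set (Vsp R L) -> \bar R)
    : 'rV[R]_L -> 'rV[R]_L :=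
  xget (fun _ => 0) [set T | is_OT_map sigma mu T].

Definition in_P2 (R : realType) (L : nat)
    (lambda : {measure set (Vsp R L) -> \bar R})
    (mu : probability (Vsp R L) R) : Prop :=
  (\int[mu]_x ((enorm x) ^+ 2)%:E < +oo)%E /\
  exists (f : Vsp R L -> R) (M : R),
    measurable_fun [set: Vsp R L] f /\ (forall x, 0 <= f x <= M) /\
    forall A : set (Vsp R L), measurable A ->
      mu A = (\int[lambda]_(x in A) (f x)%:E)%E.

Definition diffeo (R : realType) (L : nat) (g : 'rV[R]_L -> 'rV[R]_L) : Prop :=
  exists ginv : 'rV[R]_L -> 'rV[R]_L,
    cancel g ginv /\ cancel ginv g /\
    (forall x, differentiable g x) /\ (forall x, differentiable ginv x).

Definition scal_transl (R : realType) (L : nat) (h : 'rV[R]_L -> 'rV[R]_L)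
    : Prop :=
  exists (a : R) (b : 'rV[R]_L), 0 < a /\ forall x, h x = a *: x + b.

Definition convcomb (R : realType) (L : nat) (c : R)
    (g1 g2 : 'rV[R]_L -> 'rV[R]_L) : 'rV[R]_L -> 'rV[R]_L :=
  fun x => (1 - c) *: g1 x + c *: g2 x.

Definition push (R : realType) (L : nat) (mu : set (Vsp R L) -> \bar R)
    (g : 'rV[R]_L -> 'rV[R]_L) : set (Vsp R L) -> \bar R :=
  pushforward mu (g : Vsp R L -> Vsp R L).

(* Write e_i := T_sigma^{(g_i)#mu} - g_i o T_sigma^mu for g_i in G.  Since
   g_c o T_sigma^mu = (1-c) g_1 o T_sigma^mu + c g_2 o T_sigma^mu, the defect
   (1-c) T_sigma^{(g_1)#mu} + c T_sigma^{(g_2)#mu} - T_sigma^{(g_c)#mu} equals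
   (1-c) e_1 + c e_2 - e_c pointwise.  The triangle inequality in R^L and
   Minkowski's inequality in L^2(sigma) bound its norm by
   (1-c) ||e_1|| + c ||e_2|| + ||e_c|| < (1-c) delta + c delta + delta = 2 delta. *)
From HB Require Import structures.
From mathcomp Require Import all_boot all_order all_algebra.
From mathcomp Require Import all_classical all_reals all_analysis.
From mathcomp Require Import measurable_realfun ring lra.
Import Order.TTheory GRing.Theory Num.Theory.
Import numFieldNormedType.Exports.
Local Open Scope classical_set_scope.
Local Open Scope ring_scope.

Section EuclideanNorm.
Variables (R : realType) (L : nat).

Lemma sum_mul_le_sqrt_sum_sqr (a b : 'I_L -> R) :
  \sum_i a i * b i <= Num.sqrt (\sum_i a i ^+ 2) * Num.sqrt (\sum_i b i ^+ 2).
Proof.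
set A := \sum_i a i ^+ 2; set B := \sum_i b i ^+ 2; set C := \sum_i a i * b i.
have A0 : 0 <= A by apply: sumr_ge0 => i _; exact: sqr_ge0.
have B0 : 0 <= B by apply: sumr_ge0 => i _; exact: sqr_ge0.
set s := Num.sqrt A; set t := Num.sqrt B.
have [s0 t0] : 0 <= s /\ 0 <= t by split; exact: sqrtr_ge0.
(* expand 0 <= sum_i (t a_i - s b_i)^2 = 2 s t (s t - C) *)
have sq_ge0 : 0 <= \sum_i (t * a i - s * b i) ^+ 2.
  by apply: sumr_ge0 => i _; exact: sqr_ge0.
have expand i : (t * a i - s * b i) ^+ 2 =
    t ^+ 2 * a i ^+ 2 - (2 * s * t) * (a i * b i) + s ^+ 2 * b i ^+ 2.
  by ring.
rewrite (eq_bigr _ (fun i _ => expand i)) big_split /= sumrB -!mulr_sumr in sq_ge0.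
rewrite -/A -/B -/C /t /s !sqr_sqrtr // -/s -/t in sq_ge0.
have st2 : s * t * (s * t) = A * B.
  by rewrite -(sqr_sqrtr A0) -(sqr_sqrtr B0) -/s -/t; ring.
have [/eqP|st_gt0] := eqVneq (s * t) 0.
  rewrite mulf_eq0 => /orP[/eqP sA|/eqP tB].
  - have /eqP : A = 0 by apply/eqP; rewrite eq_le A0 andbT -sqrtr_eq0 -/s sA.
    rewrite psumr_eq0 => [/allP a0|i _]; last exact: sqr_ge0.
    rewrite /C big1 ?sA ?mul0r // => i _.
    by move: (a0 i (mem_index_enum i)); rewrite sqrf_eq0 => /eqP ->; rewrite mul0r.
  - have /eqP : B = 0 by apply/eqP; rewrite eq_le B0 andbT -sqrtr_eq0 -/t tB.
    rewrite psumr_eq0 => [/allP b0|i _]; last exact: sqr_ge0.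
    rewrite /C big1 ?tB ?mulr0 // => i _.
    by move: (b0 i (mem_index_enum i)); rewrite sqrf_eq0 => /eqP ->; rewrite mulr0.
have st_pos : 0 < s * t by rewrite lt_def st_gt0 mulr_ge0.
rewrite -(ler_pM2l st_pos) st2; nra.
Qed.

Lemma enorm_ge0 (x : 'rV[R]_L) : 0 <= enorm x.
Proof. exact: sqrtr_ge0. Qed.

Lemma enormD (x y : 'rV[R]_L) : enorm (x + y) <= enorm x + enorm y.
Proof.
rewrite /enorm.
set A := \sum_i x ord0 i ^+ 2; set B := \sum_i y ord0 i ^+ 2.
have A0 : 0 <= A by apply: sumr_ge0 => i _; exact: sqr_ge0.
have B0 : 0 <= B by apply: sumr_ge0 => i _; exact: sqr_ge0.
have cs := sum_mul_le_sqrt_sum_sqr (fun i => x ord0 i) (fun i => y ord0 i).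
have expand i : (x + y) ord0 i ^+ 2 =
    x ord0 i ^+ 2 + 2 * (x ord0 i * y ord0 i) + y ord0 i ^+ 2.
  by rewrite mxE; ring.
rewrite (eq_bigr _ (fun i _ => expand i)) !big_split /= -mulr_sumr -/A -/B.
have [s0 t0] := (sqrtr_ge0 A, sqrtr_ge0 B).
rewrite -(ger0_norm (addr_ge0 s0 t0)) -sqrtr_sqr ler_sqrt; last exact: sqr_ge0.
rewrite sqrrD !sqr_sqrtr //=; nra.
Qed.

Lemma enormZ (k : R) (x : 'rV[R]_L) : enorm (k *: x) = `|k| * enorm x.
Proof.
rewrite /enorm.
have expand i : (k *: x) ord0 i ^+ 2 = k ^+ 2 * x ord0 i ^+ 2.
  by rewrite mxE; ring.
by rewrite (eq_bigr _ (fun i _ => expand i)) -mulr_sumr sqrtrM ?sqr_ge0 // sqrtr_sqr.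
Qed.

Lemma enormN (x : 'rV[R]_L) : enorm (- x) = enorm x.
Proof. by rewrite -scaleN1r enormZ normrN normr1 mul1r. Qed.

Lemma enorm_convcomb_sub_le (c : R) (y1 y2 y z1 z2 : 'rV[R]_L) :
  0 <= c <= 1 ->
  enorm ((1 - c) *: y1 + c *: y2 - y) <=
    (1 - c) * enorm (y1 - z1) + c * enorm (y2 - z2)
    + enorm (y - ((1 - c) *: z1 + c *: z2)).
Proof.
move=> /andP[c0 c1].
have -> : (1 - c) *: y1 + c *: y2 - y =
    (1 - c) *: (y1 - z1) + c *: (y2 - z2) + - (y - ((1 - c) *: z1 + c *: z2)).
  by rewrite !scalerBr opprB (addrACA ((1 - c) *: y1)) -opprD -[RHS]addrA addKr.
apply: (le_trans (enormD _ _)); rewrite enormN lerD2r.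
apply: (le_trans (enormD _ _)).
by rewrite !enormZ !ger0_norm // subr_ge0.
Qed.

End EuclideanNorm.

Section L2Norm.
Context d (T : measurableType d) (R : realType).
Variable mu : {measure set T -> \bar R}.
Local Notation N2 f := (Lnorm mu 2%:E (fun x => (f x)%:E)).

Lemma measurable_powR2_norm (f : T -> R) : measurable_fun setT f ->
  measurable_fun setT (fun x => (`|f x| `^ 2)%:E).
Proof.
move=> mf; apply/measurable_EFinP.
by apply: (measurableT_comp (f := @powR R ^~ 2)) => //; exact: measurableT_comp.
Qed.

Lemma Lnorm2_le (f g : T -> R) : measurable_fun setT f -> measurable_fun setT g ->
  (forall x, 0 <= f x <= g x) -> (N2 f <= N2 g)%E.
Proof.
move=> mf mg fg; rewrite unlock /Lnorm.
under eq_integral do rewrite abse_EFin poweR_EFin.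
under [X in (_ <= X `^ _)%E]eq_integral do rewrite abse_EFin poweR_EFin.
apply: gt0_ler_poweR.
- by rewrite invr_ge0.
- by rewrite in_itv /= leey andbT; apply: integral_ge0 => x _; rewrite lee_fin powR_ge0.
- by rewrite in_itv /= leey andbT; apply: integral_ge0 => x _; rewrite lee_fin powR_ge0.
rewrite ge0_le_integral //.
- exact: measurable_powR2_norm.
- exact: measurable_powR2_norm.
move=> x _; have /andP[f0 fgx] := fg x.
rewrite lee_fin ge0_ler_powR ?nnegrE //.
by rewrite !ger0_norm // (le_trans f0).
Qed.

Lemma Lnorm2Z (k : R) (f : T -> R) : 0 <= k -> measurable_fun setT f ->
  N2 (fun x => k * f x) = (k%:E * N2 f)%E.
Proof.
move=> k0 mf; rewrite unlock /Lnorm.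
under eq_integral do rewrite abse_EFin poweR_EFin normrM powRM // EFinM.
rewrite ge0_integralZl_EFin //; last exact: measurable_powR2_norm.
under [X in (_ = _ * X `^ _)%E]eq_integral do rewrite abse_EFin poweR_EFin.
rewrite poweRM ?lee_fin ?powR_ge0 ?integral_ge0 //.
by rewrite poweR_EFin -powRrM mulfV // powRr1 // ger0_norm.
Qed.

Lemma Lnorm2D (f g : T -> R) : measurable_fun setT f -> measurable_fun setT g ->
  (N2 (fun x => f x + g x) <= N2 f + N2 g)%E.
Proof. by move=> mf mg; apply: minkowski_EFin; rewrite ?ler1n. Qed.

Lemma Lnorm2_convcomb_add_le (c : R) (f1 f2 f3 F : T -> R) :
  0 <= c <= 1 -> measurable_fun setT f1 -> measurable_fun setT f2 ->
  measurable_fun setT f3 -> measurable_fun setT F ->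
  (forall x, 0 <= F x <= (1 - c) * f1 x + c * f2 x + f3 x) ->
  (N2 F <= (1 - c)%:E * N2 f1 + c%:E * N2 f2 + N2 f3)%E.
Proof.
move=> /andP[c0 c1] m1 m2 m3 mF Fle.
have m1' : measurable_fun setT (fun x => (1 - c) * f1 x) by exact: measurable_funM.
have m2' : measurable_fun setT (fun x => c * f2 x) by exact: measurable_funM.
have m12 := measurable_funD m1' m2'.
apply: (le_trans
  (@Lnorm2_le F (fun x => (1 - c) * f1 x + c * f2 x + f3 x) mF _ Fle)).
  exact: measurable_funD.
apply: (le_trans (@Lnorm2D (fun x => (1 - c) * f1 x + c * f2 x) f3 m12 m3)).
rewrite leeD2r //.
apply: (le_trans (@Lnorm2D (fun x => (1 - c) * f1 x) (fun x => c * f2 x) m1' m2')).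
by rewrite !Lnorm2Z // subr_ge0.
Qed.

End L2Norm.

Lemma lte_convcomb_add_twice (R : realType) (x y z : \bar R) (c e : R) :
  0 <= c <= 1 -> (0 <= x)%E -> (0 <= y)%E -> (0 <= z)%E ->
  (x < e%:E)%E -> (y < e%:E)%E -> (z < e%:E)%E ->
  ((1 - c)%:E * x + c%:E * y + z < (2 * e)%:E)%E.
Proof.
move=> /andP[c0 c1] x0 y0 z0 xe ye ze.
case: x x0 xe => [x| |] // x0 xe; try by rewrite ltNge leey in xe.
case: y y0 ye => [y| |] // y0 ye; try by rewrite ltNge leey in ye.
case: z z0 ze => [z| |] // z0 ze; try by rewrite ltNge leey in ze.
rewrite !lee_fin !lte_fin in x0 y0 z0 xe ye ze.
rewrite -!EFinM -!EFinD lte_fin; nra.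
Qed.

Section Measurability.
Variables (R : realType) (L : nat).

Lemma continuous_measurable_Vsp (f : 'rV[R]_L -> R) :
  continuous f -> measurable_fun [set: Vsp R L] (f : Vsp R L -> R).
Proof.
move=> /continuousP cf.
apply: (measurability _ (measurable_realfun.RGenOpens.measurableE R)).
move=> _ [_ [a [b ->] <-]]; apply: sub_sigma_algebra; rewrite setTI.
exact/cf/interval_open.
Qed.

Lemma measurable_LOT (sigma : {measure set Vsp R L -> \bar R})
    (nu : set (Vsp R L) -> \bar R) :
  measurable_fun [set: Vsp R L] (LOT sigma nu : Vsp R L -> Vsp R L).
Proof.
rewrite /LOT; case: xgetP => [T -> [[mT _] _]|_]; first exact: mT.
exact: measurable_cst.
Qed.

Definition coord_measurable (F : 'rV[R]_L -> 'rV[R]_L) :=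
  forall i, measurable_fun [set: Vsp R L] (fun x : Vsp R L => F x ord0 i).

Lemma continuous_comp_coord_measurable (g F : 'rV[R]_L -> 'rV[R]_L) :
  continuous g -> measurable_fun [set: Vsp R L] (F : Vsp R L -> Vsp R L) ->
  coord_measurable (g \o F).
Proof.
move=> cg mF i.
apply: (measurableT_comp (f := fun x : Vsp R L => g x ord0 i)) => //.
apply: continuous_measurable_Vsp => x.
exact: (continuous_comp (cg x) (@coord_continuous R 1 L ord0 i _)).
Qed.

Lemma coord_measurableD (F G : 'rV[R]_L -> 'rV[R]_L) :
  coord_measurable F -> coord_measurable G -> coord_measurable (fun x => F x + G x).
Proof.
move=> mF mG i; rewrite (_ : (fun x => _) = (fun x => F x ord0 i + G x ord0 i)).
  exact: measurable_funD.
by apply/funext => x; rewrite mxE.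
Qed.

Lemma coord_measurableN (F : 'rV[R]_L -> 'rV[R]_L) :
  coord_measurable F -> coord_measurable (fun x => - F x).
Proof.
move=> mF i; rewrite (_ : (fun x => _) = (fun x => - F x ord0 i)).
  exact: measurableT_comp.
by apply/funext => x; rewrite mxE.
Qed.

Lemma coord_measurableZ (k : R) (F : 'rV[R]_L -> 'rV[R]_L) :
  coord_measurable F -> coord_measurable (fun x => k *: F x).
Proof.
move=> mF i; rewrite (_ : (fun x => _) = (fun x => k * F x ord0 i)).
  exact: measurable_funM.
by apply/funext => x; rewrite mxE.
Qed.

Lemma measurable_enorm (F : 'rV[R]_L -> 'rV[R]_L) : coord_measurable F ->
  measurable_fun [set: Vsp R L] (fun x : Vsp R L => enorm (F x)).
Proof.
move=> mF; apply: (measurableT_comp (f := @Num.sqrt R)).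
  by apply: continuous_measurable_fun; exact: sqrt_continuous.
by apply: measurable_sum => i; exact: measurable_funM.
Qed.

Lemma coord_measurable_LOT (sigma : {measure set Vsp R L -> \bar R})
    (nu : set (Vsp R L) -> \bar R) :
  coord_measurable (LOT sigma nu).
Proof.
exact: (@continuous_comp_coord_measurable id _ (fun x => cvg_id) (measurable_LOT _ _)).
Qed.

Lemma measurable_enorm_LOT_sub (sigma : {measure set Vsp R L -> \bar R})
    (mu nu : set (Vsp R L) -> \bar R) (g : 'rV[R]_L -> 'rV[R]_L) :
  continuous g ->
  measurable_fun [set: Vsp R L]
    (fun x : Vsp R L => enorm (LOT sigma nu x - g (LOT sigma mu x))).
Proof.
move=> cg; apply: measurable_enorm; apply: coord_measurableD.
  exact: coord_measurable_LOT.
apply: coord_measurableN.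
exact: (@continuous_comp_coord_measurable g (LOT sigma mu) cg (measurable_LOT _ _)).
Qed.

End Measurability.

Lemma diffeo_continuous (R : realType) (L : nat) (g : 'rV[R]_L -> 'rV[R]_L) :
  diffeo g -> continuous g.
Proof. by move=> [_ [_ [_ [dg _]]]] x; exact: differentiable_continuous. Qed.

Theorem proposition2 (R : realType) (L : nat) (hL : (0 < L)%N)
    (lambda : {measure set (Vsp R L) -> \bar R}) (hlambda : is_lebesgue lambda)
    (K : set 'rV[R]_L) (hKc : compact K)
    (hKconv : convex_set (K : set (convex_lmodType 'rV[R]_L)))
    (hK0 : (0 < lambda K)%E)
    (sigma : probability (Vsp R L) R)
    (hsigma : forall A : set (Vsp R L), measurable A ->
        sigma A = (lambda (A `&` K) * ((fine (lambda K))^-1)%:E)%E)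
    (mu : probability (Vsp R L) R) (hmu : in_P2 lambda mu)
    (eps : R) (heps : 0 <= eps)
    (G : set ('rV[R]_L -> 'rV[R]_L))
    (hGdiff : forall g, G g -> diffeo g)
    (hGconv : forall g1 g2 (c : R), G g1 -> G g2 -> 0 <= c <= 1 ->
        G (convcomb c g1 g2))
    (hGA : forall g, G g -> exists h, scal_transl h /\
        (L2norm mu (fun x => (g x - h x)%R)
          <= eps%:E)%E)
    (delta : R) (hdelta : 0 < delta)
    (hG : forall g, G g ->
        (L2norm sigma (fun x => (LOT sigma (push mu g) x
                                - g (LOT sigma mu x))%R) < delta%:E)%E) :
  forall (c : R) g1 g2, 0 <= c <= 1 -> G g1 -> G g2 ->
    (L2norm sigma (fun x => ((1 - c) *: LOT sigma (push mu g1) x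
                            + c *: LOT sigma (push mu g2) x
                            - LOT sigma (push mu (convcomb c g1 g2)) x)%R)
       < (2 * delta)%R%:E)%E.
Proof.
move=> c g1 g2 c01 G1 G2.
have Gc : G (convcomb c g1 g2) by exact: hGconv.
have mdefect g : G g -> measurable_fun [set: Vsp R L]
    (fun x => enorm (LOT sigma (push mu g) x - g (LOT sigma mu x))).
  by move=> Gg; apply: measurable_enorm_LOT_sub; exact: diffeo_continuous (hGdiff _ Gg).
have mF : measurable_fun [set: Vsp R L] (fun x => enorm ((1 - c) *: LOT sigma
    (push mu g1) x + c *: LOT sigma (push mu g2) x
    - LOT sigma (push mu (convcomb c g1 g2)) x)).
  apply: measurable_enorm; apply: coord_measurableD.
    by apply: coord_measurableD; apply: coord_measurableZ; exact: coord_measurable_LOT.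
  by apply: coord_measurableN; exact: coord_measurable_LOT.
rewrite /L2norm; apply: le_lt_trans.
  apply: (@Lnorm2_convcomb_add_le _ _ _ sigma c _ _ _ _ c01
    (mdefect _ G1) (mdefect _ G2) (mdefect _ Gc) mF).
  by move=> x; rewrite enorm_ge0 enorm_convcomb_sub_le.
apply: lte_convcomb_add_twice => //; try exact: Lnorm_ge0; exact: hG.
Qed.
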